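(* Let $\gamma:J\to{\rm AdS}$ be a stationary curve of the LIEN flow, with evolution $(s,t)\mapsto A(t)\gamma(s+2\ell t)B(t)^{-1}$ for some $\ell\in\mathbb{R}$. Then its bending $\kappa$ satisfies $$\kappa'''+2\ell\kappa'-6\kappa\kappa'=0,$$ and the bending of its evolution is the traveling wave $\kappa(s+2\ell t)$, a solution of the KdV equation $\partial_t\kappa+\partial_s^3\kappa-6\kappa\partial_s\kappa=0$.
   Context: ${\rm AdS}={\rm SL}(2,\mathbb{R})$ with the metric induced by the polarization of $q(X)=-\det X$. Null curves are future-directed, without inflection points, parametrized by proper time ($\langle\gamma'',\gamma''\rangle=4$), with bending $\kappa=-\frac1{16}\langle\gamma''',\gamma'''\rangle$, $T=\gamma'/\sqrt2$, $B=\frac1{\sqrt2}\kappa\gamma'-\frac1{2\sqrt2}\gamma'''$. The LIEN flow is $\partial_t\gamma=-2\sqrt2(\kappa T+2B)$ for families $\gamma(s,t)$ of such curves. A null curve $\gamma$ is a stationary curve of the LIEN flow if its evolution by the flow (the solution with initial condition $\gamma$) is $(s,t)\mapsto A(t)\gamma(s+2\ell t)B(t)^{-1}$ for some $\ell\in\mathbb{R}$ and smooth $A,B:I\to{\rm SL}(2,\mathbb{R})$ with $A(0)=B(0)=I_2$. A prime denotes $d/ds$. *)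

(* AdS = SL(2,R) inside 'M[R]_2. *)
From HB Require Import structures.
From mathcomp Require Import all_boot all_order all_algebra.
From mathcomp Require Import all_classical all_reals all_analysis.
Set Implicit Arguments. Unset Strict Implicit. Unset Printing Implicit Defensive.
Import Order.TTheory GRing.Theory Num.Theory.
Import numFieldNormedType.Exports.
Local Open Scope classical_set_scope.
Local Open Scope ring_scope.

Section AdS.
Variable R : realType.
Notation M2 := 'M[R]_2.

Definition adsq (X : M2) : R := - \det X.
Definition ads_ip (X Y : M2) : R := (adsq (X + Y) - adsq X - adsq Y) / 2.

Definition in_AdS (X : M2) : Prop := \det X = 1.

(* time orientation: the timelike left(=right)-invariant field p |-> p *m J0 *)
Definition J0 : M2 := \matrix_(i < 2, j < 2)
  (if (i == 0) && (j == 1) then -1 else if (i == 1) && (j == 0) then 1 else 0).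

Definition future_directed (p v : M2) : Prop := ads_ip v (p *m J0) < 0.

Definition dn (n : nat) (f : R -> M2) : R -> M2 := derive1n n f.

Definition smooth_at (f : R -> M2) (x : R) : Prop :=
  forall n, derivable (dn n f) x 1.
Definition rsmooth_at (f : R -> R) (x : R) : Prop :=
  forall n, derivable (derive1n n f) x 1.

Definition no_inflection_at (g : R -> M2) (s : R) : Prop :=
  forall a b : R, a *: dn 1 g s + b *: dn 2 g s = 0 -> a = 0 /\ b = 0.

(* null curve in AdS on the set J, future directed, without inflection
   points, parametrized by proper time *)
Definition null_curve (J : set R) (g : R -> M2) : Prop :=
  forall s, J s ->
    smooth_at g s /\ in_AdS (g s) /\
    ads_ip (dn 1 g s) (dn 1 g s) = 0 /\
    future_directed (g s) (dn 1 g s) /\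
    no_inflection_at g s /\
    ads_ip (dn 2 g s) (dn 2 g s) = 4.

Definition bending (g : R -> M2) (s : R) : R :=
  - (1 / 16) * ads_ip (dn 3 g s) (dn 3 g s).

Definition frameT (g : R -> M2) (s : R) : M2 :=
  (Num.sqrt 2)^-1 *: dn 1 g s.
Definition frameB (g : R -> M2) (s : R) : M2 :=
  ((Num.sqrt 2)^-1 * bending g s) *: dn 1 g s
  - (2 * Num.sqrt 2)^-1 *: dn 3 g s.

Definition lien_velocity (g : R -> M2) (s : R) : M2 :=
  (- (2 * Num.sqrt 2)) *: (bending g s *: frameT g s + 2 *: frameB g s).

Definition open_itv (a b : \bar R) : set R := [set x | (a < x%:E < b)%E].

Definition in_SL2 (A : M2) : Prop := \det A = 1.

Definition evolution (g : R -> M2) (l : R) (A B : R -> M2) (s t : R) : M2 :=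
  A t *m g (s + 2 * l * t) *m invmx (B t).

Definition stationary_LIEN (J I : set R) (g : R -> M2) (l : R) (A B : R -> M2) : Prop :=
  null_curve J g /\
  I 0 /\
  (forall t, I t -> smooth_at A t /\ smooth_at B t /\ in_SL2 (A t) /\ in_SL2 (B t)) /\
  A 0 = 1%:M /\ B 0 = 1%:M /\
  (forall t, I t -> null_curve J (fun s => evolution g l A B s t)) /\
  (forall s t, J s -> I t ->
        derivable (fun t => evolution g l A B s t) t 1 /\
        derive1 (fun t => evolution g l A B s t) t
          = lien_velocity (fun s => evolution g l A B s t) s).

End AdS.

(* Write F_t for the evolution at time t.  Being the image of the translate
   gamma(. + 2 l t) under the isometry X |-> A(t) X B(t)^-1, F_t has bending
   kappa(s + 2 l t), a traveling wave, so d/dt kappa = 2 l kappa'.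
   Differentiating F_t in t, the LIEN equation becomes
   a F + F b = 2 F''' - (6 kappa + 2 l) F' with constant a = A' A^-1,
   b = B (B^-1)' and tr a + tr b = 0 (Jacobi's formula), i.e. X |-> a X + X b is
   an infinitesimal isometry of AdS.  Applying it to F''' (the third derivative
   of the relation, rewritten with F'''' = -4 F + 2 kappa' F' + 4 kappa F'', which
   holds because the frame (F, F', F'', F''') has invertible Gram matrix) and
   pairing with F''' gives 8 (kappa''' + 2 l kappa' - 6 kappa kappa') = 0; adding
   d/dt kappa = 2 l kappa' turns this into the KdV equation. *)

From HB Require Import structures.
From mathcomp Require Import all_boot all_order all_algebra.
From mathcomp Require Import all_classical all_reals all_analysis.
From mathcomp Require Import ring lra.
Import Order.TTheory GRing.Theory Num.Theory.
Import numFieldNormedType.Exports.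
Local Open Scope classical_set_scope.
Local Open Scope ring_scope.
Set Implicit Arguments. Unset Strict Implicit. Unset Printing Implicit Defensive.

Section AdSMetric.
Variable R : realType.
Notation M2 := 'M[R]_2.
Implicit Types X Y Z : M2.

Lemma ord2_cases (i : 'I_2) : i = 0 \/ i = 1.
Proof. by case: i => [[|[|//]] ?]; [left|right]; apply/val_inj. Qed.

Lemma mx2_eq X Y : X 0 0 = Y 0 0 -> X 0 1 = Y 0 1 -> X 1 0 = Y 1 0 ->
  X 1 1 = Y 1 1 -> X = Y.
Proof.
move=> *; apply/matrixP => i j.
by case: (ord2_cases i) => ->; case: (ord2_cases j) => ->.
Qed.

Lemma big_ord2 (F : 'I_2 -> R) : \sum_i F i = F 0 + F 1.
Proof. by rewrite big_ord_recr big_ord1; congr (F _ + F _); apply/val_inj. Qed.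

Lemma mulmx2E X Y i j : (X *m Y) i j = X i 0 * Y 0 j + X i 1 * Y 1 j.
Proof. by rewrite mxE big_ord2. Qed.

Lemma mxtrace2 X : \tr X = X 0 0 + X 1 1.
Proof. exact: big_ord2. Qed.

Lemma det2 X : \det X = X 0 0 * X 1 1 - X 0 1 * X 1 0.
Proof.
rewrite (expand_det_row _ 0) big_ord2 /cofactor !det_mx11 !mxE /=.
have -> : lift 0 (0 : 'I_1) = 1 :> 'I_2 by apply/val_inj.
have -> : lift 1 (0 : 'I_1) = 0 :> 'I_2 by apply/val_inj.
by rewrite expr0 expr1; ring.
Qed.

Lemma adj2 X : \adj X = \matrix_(i < 2, j < 2)
  (if i == 0 then (if j == 0 then X 1 1 else - X 0 1)
   else (if j == 0 then - X 1 0 else X 0 0)).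
Proof.
apply/matrixP => i j; rewrite !mxE /cofactor det_mx11 !mxE.
case: i => [[|[|//]] ?]; case: j => [[|[|//]] ?] /=.
- by rewrite expr0 mul1r; congr (X _ _); apply/val_inj.
- by rewrite expr1 mulN1r; congr (- X _ _); apply/val_inj.
- by rewrite expr1 mulN1r; congr (- X _ _); apply/val_inj.
- by rewrite sqrrN expr1n mul1r; congr (X _ _); apply/val_inj.
Qed.

Lemma ads_ipE X Y : ads_ip X Y =
  - (X 0 0 * Y 1 1 + X 1 1 * Y 0 0 - X 0 1 * Y 1 0 - X 1 0 * Y 0 1) / 2.
Proof. by rewrite /ads_ip /adsq !det2 !mxE; congr (_ / 2); ring. Qed.

Lemma ads_ipC X Y : ads_ip X Y = ads_ip Y X.
Proof. by rewrite !ads_ipE; congr (_ / _); ring. Qed.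

Lemma ads_ipDl X Y Z : ads_ip (X + Y) Z = ads_ip X Z + ads_ip Y Z.
Proof. by rewrite !ads_ipE !mxE; field. Qed.

Lemma ads_ipZl (k : R) X Z : ads_ip (k *: X) Z = k * ads_ip X Z.
Proof. by rewrite !ads_ipE !mxE; field. Qed.

Lemma ads_ipNl X Z : ads_ip (- X) Z = - ads_ip X Z.
Proof. by rewrite -scaleN1r ads_ipZl mulN1r. Qed.

Lemma ads_ipxx X : ads_ip X X = - \det X.
Proof. by rewrite ads_ipE det2; field. Qed.

Lemma ads_ip_SL2 (P Q X Y : M2) : \det P = 1 -> \det Q = 1 ->
  ads_ip (P *m X *m Q) (P *m Y *m Q) = ads_ip X Y.
Proof.
move=> dP dQ; rewrite /ads_ip /adsq -mulmxDl -mulmxDr !det_mulmx dP dQ.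
by rewrite !(mul1r, mulr1).
Qed.

(* Differentiating [det (exp(ua) X exp(ub))] at [u = 0]: the maps [X |-> a X + X b]
   with [tr a + tr b = 0] are the infinitesimal isometries of AdS. *)
Lemma ads_ip_inf_isometry (a b X : M2) : \tr a + \tr b = 0 ->
  ads_ip (a *m X + X *m b) X = 0.
Proof.
rewrite !mxtrace2 => tr0; rewrite ads_ipE !mxE !big_ord2.
have -> : b 1 1 = - a 0 0 - a 1 1 - b 0 0 by lra.
by rewrite -mulNr; apply/eqP; rewrite mulf_eq0; apply/orP; left; apply/eqP; ring.
Qed.

Lemma det_adj2 X : \det (\adj X) = \det X.
Proof. by rewrite !det2 adj2 !mxE /=; ring. Qed.

Lemma adj2K X : \adj (\adj X) = X.
Proof. by apply: mx2_eq; rewrite !adj2 !mxE /= ?opprK. Qed.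

Lemma invmx_SL2 X : \det X = 1 -> invmx X = \adj X.
Proof. by move=> dX; rewrite /invmx unitmxE dX unitr1 invr1 scale1r. Qed.

Lemma mulmx_adj_cancel_SL2 (P P' Q Q' X X' : M2) : \det P = 1 -> \det Q = 1 ->
  (P' *m (\adj P *m X *m Q) + P *m (\adj P *m X' *m Q)) *m \adj Q
    + P *m (\adj P *m X *m Q) *m Q'
  = P' *m \adj P *m X + X' + X *m (Q *m Q').
Proof.
move=> dP dQ; rewrite mulmxDl !mulmxA mul_mx_adj dP !mul1mx.
by rewrite -!(mulmxA _ Q) mul_mx_adj dQ !mulmx1.
Qed.
End AdSMetric.

Section Nondegeneracy.
Variable R : realType.
Notation M2 := 'M[R]_2.
Implicit Types X Y : M2.

Definition ads_gram (e : 'I_4 -> M2) : 'M[R]_4 :=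
  \matrix_(i, j) ads_ip (e i) (e j).

Definition mx2_coord Y (j : 'I_4) : R :=
  match val j with 0 => Y 0 0 | 1 => Y 0 1 | 2 => Y 1 0 | _ => Y 1 1 end.
Definition ads_dual X (j : 'I_4) : R :=
  match val j with
  | 0 => - X 1 1 / 2 | 1 => X 1 0 / 2 | 2 => X 0 1 / 2 | _ => - X 0 0 / 2 end.

Lemma big_ord4 (F : 'I_4 -> R) : \sum_j F j = F 0 + F 1 + F 2 + F 3.
Proof.
rewrite !big_ord_recr big_ord0 /= add0r.
by congr (_ + _ + _ + _); congr F; apply/val_inj.
Qed.

Lemma ads_ip_coord X Y : ads_ip X Y = \sum_j mx2_coord Y j * ads_dual X j.
Proof. by rewrite big_ord4 ads_ipE /mx2_coord /ads_dual /=; field. Qed.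

Lemma ads_ip_nondegenerate (e : 'I_4 -> M2) Y :
  ads_gram e \in unitmx -> (forall i, ads_ip Y (e i) = 0) -> Y = 0.
Proof.
move=> gram_unit Ye.
pose E : 'M[R]_4 := \matrix_(i, j) mx2_coord (e i) j.
pose D : 'M[R]_4 := \matrix_(j, i) ads_dual (e i) j.
have ED : E *m D = (ads_gram e)^T.
  by apply/matrixP => i j; rewrite !mxE ads_ip_coord; apply: eq_bigr => k _; rewrite !mxE.
have [E_unit _] : E \in unitmx /\ D *m invmx (ads_gram e)^T \in unitmx.
  by apply: mulmx1_unit; rewrite mulmxA ED mulmxV ?unitmx_tr.
pose w : 'cV[R]_4 := \col_j ads_dual Y j.
have Ew : E *m w = 0.
  apply/matrixP => i k; rewrite !mxE -[RHS](Ye i) ads_ip_coord.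
  by apply: eq_bigr => j _; rewrite !mxE.
have w0 : w = 0 by rewrite -(mulKmx E_unit w) Ew mulmx0.
have dual0 j : ads_dual Y j = 0.
  by have := congr1 (fun M : 'cV[R]_4 => M j 0) w0; rewrite !mxE.
have := dual0 0; have := dual0 1; have := dual0 2; have := dual0 3.
by rewrite /ads_dual /= => ? ? ? ?; apply: mx2_eq; rewrite mxE; lra.
Qed.

(* The Gram matrix of the frame [(g, g', g'', g''')] of a null curve,
   with [k = ads_ip g''' g'''] (see [null_frame_gram_unit]). *)
Definition null_gram (k : R) : 'M[R]_4 := \matrix_(i, j)
  match val i, val j with
  | 0, 0 => -1 | 1, 3 | 3, 1 => -4 | 2, 2 => 4 | 3, 3 => k | _, _ => 0 end.

Lemma null_gram_unit k : null_gram k \in unitmx.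
Proof.
pose inv : 'M[R]_4 := \matrix_(i, j)
  match val i, val j with
  | 0, 0 => -1 | 1, 1 => - k / 16 | 1, 3 | 3, 1 => - 1 / 4 | 2, 2 => 1 / 4
  | _, _ => 0 end.
suff /mulmx1_unit[] : null_gram k *m inv = 1%:M by [].
apply/matrixP => i j; rewrite !mxE big_ord4 !mxE.
by case: i => [[|[|[|[|//]]]] ?]; case: j => [[|[|[|[|//]]]] ?] /=; field.
Qed.
End Nondegeneracy.

Section MatrixCalculus.
Variable R : realType.
Notation M2 := 'M[R]_2.

Lemma is_derive_mxP m n (F : R -> 'M[R]_(m, n)) (x : R) (D : 'M[R]_(m, n)) :
  is_derive x 1 F D <-> forall i j, is_derive x 1 (fun z => F z i j) (D i j).
Proof.
split=> [[dF <-] i j | dFij].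
  by apply: DeriveDef; [move/derivable_mxP: dF; exact | rewrite derive_mx // mxE].
have dF : derivable F x 1.
  by apply/derivable_mxP => i j; exact: (dFij i j).(ex_derive).
apply: DeriveDef => //; apply/matrixP => i j.
by rewrite derive_mx // mxE; exact: (dFij i j).(derive_val).
Qed.

Local Instance is_derive_mx_entry m n (F : R -> 'M[R]_(m, n)) (x : R) D i j :
  is_derive x 1 F D -> is_derive x 1 (fun z => F z i j) (D i j).
Proof. by move/is_derive_mxP. Qed.

Global Instance is_derive_mulmx m n p (F : R -> 'M[R]_(m, n))
    (G : R -> 'M[R]_(n, p)) (x : R) dF dG :
  is_derive x 1 F dF -> is_derive x 1 G dG ->
  is_derive x 1 (fun z => F z *m G z) (dF *m G x + F x *m dG : 'M[R]_(m, p)).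
Proof.
move=> hF hG; apply/is_derive_mxP => i j.
have -> : (fun z => (F z *m G z) i j) = \sum_k (fun z => F z i k * G z k j).
  by apply/funext => z; rewrite mxE fct_sumE.
apply: is_derive_eq; rewrite !mxE -big_split /=.
by apply: eq_bigr => k _; rewrite [LHS]addrC [X in X + _]mulrC; congr (_ + _).
Qed.

Global Instance is_derive_scalemx m n (k : R -> R) (F : R -> 'M[R]_(m, n))
    (x : R) dk dF :
  is_derive x 1 k dk -> is_derive x 1 F dF ->
  is_derive x 1 (fun z => k z *: F z) (dk *: F x + k x *: dF : 'M[R]_(m, n)).
Proof.
move=> hk hF; apply/is_derive_mxP => i j.
have -> : (fun z => (k z *: F z) i j) = (fun z => k z * F z i j).
  by apply/funext => z; rewrite mxE.
by apply: is_derive_eq; rewrite !mxE [LHS]addrC [X in X + _]mulrC; congr (_ + _).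
Qed.

Global Instance is_derive_ads_ip (F G : R -> M2) (x : R) dF dG :
  is_derive x 1 F dF -> is_derive x 1 G dG ->
  is_derive x 1 (fun z => ads_ip (F z) (G z)) (ads_ip dF (G x) + ads_ip (F x) dG).
Proof.
move=> hF hG.
have -> : (fun z => ads_ip (F z) (G z)) = (fun z => (- (1 / 2)) *
    (F z 0 0 * G z 1 1 + F z 1 1 * G z 0 0 - F z 0 1 * G z 1 0 - F z 1 0 * G z 0 1)).
  by apply/funext => z; rewrite ads_ipE; field.
by apply: is_derive_eq; rewrite !ads_ipE /GRing.scale /=; field.
Qed.

Global Instance is_derive_adj2 (M : R -> M2) (x : R) dM :
  is_derive x 1 M dM -> is_derive x 1 (fun z => \adj (M z)) (\adj dM).
Proof.
move=> hM; apply/is_derive_mxP => i j; rewrite adj2 mxE.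
under eq_fun do rewrite adj2 mxE.
by case: (ord2_cases i) => ->; case: (ord2_cases j) => -> /=; exact: is_derive_eq.
Qed.

Lemma is_derive_det2 (M : R -> M2) (x : R) dM : is_derive x 1 M dM ->
  is_derive x 1 (fun z => \det (M z)) (\tr (\adj (M x) *m dM)).
Proof.
move=> hM; under eq_fun do rewrite det2.
by apply: is_derive_eq; rewrite mxtrace2 !mulmx2E adj2 !mxE /GRing.scale /=; ring.
Qed.

Lemma mxtrace_adj_derive_SL2 (M : R -> M2) (t : R) dM : is_derive t 1 M dM ->
  (\forall z \near t, \det (M z) = 1) -> \tr (\adj (M t) *m dM) = 0.
Proof.
move=> hM det1; rewrite -(is_derive_det2 hM).(derive_val).
by rewrite (near_eq_derive _ det1) derive_cst.
Qed.

Lemma is_derive1 (W : normedModType R) (f : R -> W) (x : R) :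
  derivable f x 1 -> is_derive x 1 f (derive1 f x).
Proof. by move/derivableP; rewrite derive1E. Qed.

Lemma is_derive_dn (F : R -> M2) (x : R) n : smooth_at F x ->
  is_derive x 1 (dn n F) (dn n.+1 F x).
Proof. by move=> sF; apply: DeriveDef; [exact: sF | rewrite /dn derive1nS derive1E]. Qed.

Lemma is_derive_affine (W : normedModType R) (f : R -> W) (y k x : R) df :
  is_derive y 1 f df -> is_derive x 1 (fun u => f (y + k * (u - x))) (k *: df).
Proof.
move=> [df_y <-]; set h := fun u => y + k * (u - x).
have hx : h x = y by rewrite /h subrr mulr0 addr0.
have dh : is_derive x 1 h k.
  by apply: is_derive_eq; rewrite /GRing.scale /=; ring.
have diff_h : differentiable h x by apply/derivable1_diffP; exact: dh.(ex_derive).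
have diff_f : differentiable f y by apply/derivable1_diffP.
have diff_fh : differentiable (f \o h) x by apply: differentiable_comp; rewrite ?hx.
apply: DeriveDef; first exact/derivable1_diffP.
rewrite (deriveE _ diff_fh) diff_comp ?hx //= -(deriveE _ diff_h) dh.(derive_val).
by rewrite (deriveE _ diff_f) -linearZ /GRing.scale /= mulr1.
Qed.
End MatrixCalculus.

Section RealCalculus.
Variable R : realType.

Lemma open_itv_nbhs (a b : \bar R) x : open_itv a b x ->
  \forall z \near x, open_itv a b z.
Proof.
move=> /andP[ax xb].
have near_a : \forall z \near x, (a < z%:E)%E.
  case: a ax => [r| |] //= ax; last by near=> z; exact: ltNyr.
  by near=> z; rewrite lte_fin; near: z; apply: lt_nbhsr; rewrite -lte_fin.
have near_b : \forall z \near x, (z%:E < b)%E.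
  case: b xb => [r| |] //= xb; last by near=> z; exact: ltry.
  by near=> z; rewrite lte_fin; near: z; apply: lt_nbhsl; rewrite -lte_fin.
by near=> z; apply/andP; split; near: z.
Unshelve. all: by end_near.
Qed.

Lemma near_affine (P : set R) (s k t : R) : (\forall z \near s, P z) ->
  \forall u \near t, P (s + k * (u - t)).
Proof.
have : (fun u => s + k * (u - t)) @ t --> s + k * (t - t).
  apply: cvgD; first exact: cvg_cst.
  by apply: cvgM; [exact: cvg_cst | apply: cvgB; [exact: cvg_id | exact: cvg_cst]].
have -> : s + k * (t - t) = s by rewrite subrr mulr0 addr0.
by move=> cvg_h /cvg_h.
Qed.

Lemma derive1_shift (W : normedModType R) (f : R -> W) (c x : R) :
  derive1 (fun z => f (z + c)) x = derive1 f (x + c).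
Proof.
rewrite !derive1E /derive.
suff -> : (fun h : R => h^-1 *: (f (h *: 1 + x + c) - f (x + c))) =
  (fun h : R => h^-1 *: (f (h *: 1 + (x + c)) - f (x + c))) by [].
by apply/funext => h; rewrite addrA.
Qed.
End RealCalculus.

Section LIEN.
Variable R : realType.

Lemma sqrt2_neq0 : Num.sqrt (2 : R) != 0.
Proof. by rewrite sqrtr_eq0 -ltNge ltr0n. Qed.

Lemma lien_velocityE (F : R -> 'M[R]_2) s :
  lien_velocity F s = 2 *: dn 3 F s - (6 * bending F s) *: dn 1 F s.
Proof.
rewrite /lien_velocity /frameT /frameB.
move: (bending F s) (dn 1 F s) (dn 3 F s) => k X1 X3.
by apply/matrixP => i j; rewrite !mxE; field; rewrite sqrt2_neq0.
Qed.

Lemma derivable_bending (F : R -> 'M[R]_2) s :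
  smooth_at F s -> derivable (bending F) s 1.
Proof.
by move=> sF; have d3 := is_derive_dn 3 sF; rewrite /bending; exact: ex_derive.
Qed.
End LIEN.

(* [bending F] is [frame_bending (fun n => dn n F)] by conversion; keeping the
   frame [G] abstract stops [ring] and [lra] from unfolding iterated derivatives
   when comparing atoms. *)
Definition frame_bending {R : realType} (G : nat -> R -> 'M[R]_2) (z : R) : R :=
  - (1 / 16) * ads_ip (G 3 z) (G 3 z).

Section NullFrame.
Variables (R : realType) (J : set R) (G : nat -> R -> 'M[R]_2).
Hypothesis J_nbhs : forall s, J s -> \forall z \near s, J z.
Hypothesis G_deriv : forall n s, J s -> is_derive s 1 (G n) (G n.+1 s).
Hypothesis G_det : forall s, J s -> \det (G 0 s) = 1.
Hypothesis G_null : forall s, J s -> ads_ip (G 1 s) (G 1 s) = 0.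
Hypothesis G_proper : forall s, J s -> ads_ip (G 2 s) (G 2 s) = 4.

Local Notation gram i j z := (ads_ip (G i z) (G j z)).
Local Notation kappa := (frame_bending G).

Lemma derive_eq_on (W : normedModType R) (f h : R -> W) s :
  (forall z, J z -> f z = h z) -> J s -> 'D_1 f s = 'D_1 h s.
Proof.
by move=> fh Js; apply: near_eq_derive; near=> z; apply: fh; near: z; exact: J_nbhs.
Unshelve. all: by end_near.
Qed.

Lemma is_derive_eq_on (W : normedModType R) (f h : R -> W) s df :
  (forall z, J z -> f z = h z) -> J s -> is_derive s 1 f df -> is_derive s 1 h df.
Proof.
move=> fh Js; apply: near_eq_is_derive.
by near=> z; apply: fh; near: z; exact: J_nbhs.
Unshelve. all: by end_near.
Qed.

Lemma gramC i j z : gram i j z = gram j i z.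
Proof. exact: ads_ipC. Qed.

Lemma is_derive_gram i j s : J s ->
  is_derive s 1 (fun z => gram i j z) (gram i.+1 j s + gram i j.+1 s).
Proof. by move=> Js; apply: is_derive_ads_ip; exact: G_deriv. Qed.

Lemma gram_next i j c s : (forall z, J z -> gram i j z = c) -> J s ->
  gram i j.+1 s = - gram i.+1 j s.
Proof.
move=> gc Js; apply/eqP; rewrite -addr_eq0 addrC; apply/eqP.
rewrite -(is_derive_gram i j Js).(derive_val) (derive_eq_on (h := cst c)) //.
exact: derive_cst.
Qed.

Lemma gram_diag_next i c s : (forall z, J z -> gram i i z = c) -> J s ->
  gram i i.+1 s = 0.
Proof.
move=> gc Js; have := gram_next gc Js; rewrite gramC.
by move: (gram i i.+1 s) => x; lra.
Qed.

Lemma gram00 s : J s -> gram 0 0 s = -1.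
Proof. by move=> Js; rewrite ads_ipxx G_det. Qed.

Lemma gram01 s : J s -> gram 0 1 s = 0. Proof. exact: gram_diag_next gram00. Qed.
Lemma gram12 s : J s -> gram 1 2 s = 0. Proof. exact: gram_diag_next G_null. Qed.
Lemma gram23 s : J s -> gram 2 3 s = 0. Proof. exact: gram_diag_next G_proper. Qed.

Lemma gram02 s : J s -> gram 0 2 s = 0.
Proof. by move=> Js; rewrite (gram_next gram01) // G_null // oppr0. Qed.

Lemma gram13 s : J s -> gram 1 3 s = -4.
Proof. by move=> Js; rewrite (gram_next gram12) // G_proper. Qed.

Lemma gram03 s : J s -> gram 0 3 s = 0.
Proof. by move=> Js; rewrite (gram_next gram02) // gram12 // oppr0. Qed.

Lemma gram14 s : J s -> gram 1 4 s = 0.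
Proof. by move=> Js; rewrite (gram_next gram13) // gram23 // oppr0. Qed.

Lemma gram04 s : J s -> gram 0 4 s = 4.
Proof. by move=> Js; rewrite (gram_next gram03) // gram13 // opprK. Qed.

Lemma gram24 s : J s -> gram 2 4 s = - gram 3 3 s.
Proof. exact: gram_next gram23. Qed.

Lemma gram33 s : gram 3 3 s = -16 * kappa s.
Proof. by rewrite /frame_bending mulrA; field. Qed.

Lemma is_derive_bending s : J s -> is_derive s 1 kappa (- (1 / 8) * gram 4 3 s).
Proof.
move=> Js; have dG3 := G_deriv 3 Js; rewrite /frame_bending.
by apply: is_derive_eq; rewrite (gramC 3 4) /GRing.scale /=; field.
Qed.

Lemma gram43 s : J s -> gram 4 3 s = -8 * derive1 kappa s.
Proof. by move=> Js; rewrite derive1E (is_derive_bending Js).(derive_val); field. Qed.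

Lemma is_derive_bending1 s : J s ->
  is_derive s 1 (derive1 kappa) (- (1 / 8) * (gram 5 3 s + gram 4 4 s)).
Proof.
move=> Js; apply: (is_derive_eq_on (f := fun z => - (1 / 8) * gram 4 3 z)).
- by move=> z Jz; rewrite gram43 //; field.
- exact: Js.
have dG4 := G_deriv 4 Js; have dG3 := G_deriv 3 Js.
by apply: is_derive_eq; rewrite /GRing.scale.
Qed.

Lemma derivable_bending2 s : J s -> derivable (derive1 (derive1 kappa)) s 1.
Proof.
move=> Js; have dG5 := G_deriv 5 Js; have dG4 := G_deriv 4 Js; have dG3 := G_deriv 3 Js.
have dk2 z : J z -> - (1 / 8) * (gram 5 3 z + gram 4 4 z) = derive1 (derive1 kappa) z.
  by move=> Jz; rewrite derive1E (is_derive_bending1 Jz).(derive_val).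
exact: (is_derive_eq_on dk2 Js _).(ex_derive).
Qed.

Lemma null_frame_gram_unit s : J s -> ads_gram (fun i : 'I_4 => G i s) \in unitmx.
Proof.
move=> Js; suff -> : ads_gram (fun i : 'I_4 => G i s) = null_gram (gram 3 3 s).
  exact: null_gram_unit.
apply/matrixP => i j; rewrite !mxE.
case: i => [[|[|[|[|//]]]] ?]; case: j => [[|[|[|[|//]]]] ?] /=;
  rewrite ?(gramC 1 0) ?(gramC 2 0) ?(gramC 3 0) ?(gramC 2 1) ?(gramC 3 1)
    ?(gramC 3 2) ?gram00 ?gram01 ?gram02 ?gram03 ?G_null ?gram12 ?gram13
    ?G_proper ?gram23 //.
Qed.

Lemma null_frame_structure s : J s -> G 4 s =
  (-4) *: G 0 s + (2 * derive1 kappa s) *: G 1 s + (4 * kappa s) *: G 2 s.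
Proof.
move=> Js; apply/subr0_eq/(ads_ip_nondegenerate (null_frame_gram_unit Js)) => i.
rewrite ads_ipDl ads_ipNl !ads_ipDl !ads_ipZl.
case: i => [[|[|[|[|//]]]] ?] /=.
- rewrite (gramC 4 0) (gramC 1 0) (gramC 2 0).
  by rewrite gram04 // gram00 // gram01 // gram02 //; ring.
- by rewrite (gramC 4 1) (gramC 2 1) gram14 // gram01 // G_null // gram12 //; ring.
- by rewrite (gramC 4 2) gram24 // gram02 // gram12 // G_proper // gram33; ring.
- by rewrite gram43 // gram03 // gram13 // gram23 //; ring.
Qed.

Variables (a b : 'M[R]_2) (l : R).
Hypothesis G_stationary : forall s, J s ->
  a *m G 0 s + G 0 s *m b = 2 *: G 3 s - (6 * kappa s + 2 * l) *: G 1 s.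
Hypothesis ab_trace : \tr a + \tr b = 0.

(* The infinitesimal rigid motion of the flow: it commutes with [d/ds]
   (constant coefficients) and is skew for [ads_ip] ([ads_ip_inf_isometry]). *)
Local Notation motion X := (a *m X + X *m b).

Lemma motion_next n (E : R -> 'M[R]_2) s :
  (forall z, J z -> motion (G n z) = E z) -> J s -> motion (G n.+1 s) = 'D_1 E s.
Proof.
move=> motionE Js; have dGn := G_deriv n Js.
have dmotion : is_derive s 1 (fun z => motion (G n z)) (motion (G n.+1 s)).
  by apply: is_derive_eq; rewrite mul0mx mulmx0 add0r addr0.
by rewrite -dmotion.(derive_val) (derive_eq_on motionE).
Qed.

Lemma motion_G1 s : J s -> motion (G 1 s) =
  (-8) *: G 0 s - (2 * derive1 kappa s) *: G 1 s + (2 * kappa s - 2 * l) *: G 2 s.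
Proof.
move=> Js; have dG1 := G_deriv 1 Js; have dG3 := G_deriv 3 Js.
have dk := is_derive1 (is_derive_bending Js).(ex_derive).
rewrite (motion_next G_stationary Js) derive_val (null_frame_structure Js).
by apply/matrixP => i j; rewrite !mxE /GRing.scale /=; ring.
Qed.

Lemma motion_G2 s : J s -> motion (G 2 s) =
  - (8 + 2 * derive1 (derive1 kappa) s) *: G 1 s + (2 * kappa s - 2 * l) *: G 3 s.
Proof.
move=> Js; have dG0 := G_deriv 0 Js; have dG1 := G_deriv 1 Js.
have dG2 := G_deriv 2 Js; have dk := is_derive1 (is_derive_bending Js).(ex_derive).
have dk1 := is_derive1 (is_derive_bending1 Js).(ex_derive).
rewrite (motion_next motion_G1 Js) derive_val.
by apply/matrixP => i j; rewrite !mxE /GRing.scale /=; ring.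
Qed.

Lemma motion_G3 s : J s -> motion (G 3 s) =
  - (2 * derive1 (derive1 (derive1 kappa)) s) *: G 1 s
  - (8 + 2 * derive1 (derive1 kappa) s) *: G 2 s
  + (2 * derive1 kappa s) *: G 3 s + (2 * kappa s - 2 * l) *: G 4 s.
Proof.
move=> Js; have dG1 := G_deriv 1 Js; have dG3 := G_deriv 3 Js.
have dk := is_derive1 (is_derive_bending Js).(ex_derive).
have dk1 := is_derive1 (is_derive_bending1 Js).(ex_derive).
have dk2 := is_derive1 (derivable_bending2 Js).
rewrite (motion_next motion_G2 Js) derive_val.
(* Abstract the derivatives of [kappa]: [ring] compares atoms up to conversion. *)
move: (kappa s) (derive1 kappa s) (derive1 (derive1 kappa) s) => k0 k1 k2.
move: (derive1 (derive1 (derive1 kappa)) s) => k3.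
by apply/matrixP => i j; rewrite !mxE /GRing.scale /=; ring.
Qed.

Lemma frame_bending_stationary_ode s : J s ->
  derive1 (derive1 (derive1 kappa)) s + 2 * l * derive1 kappa s
    - 6 * kappa s * derive1 kappa s = 0.
Proof.
move=> Js; have := ads_ip_inf_isometry (G 3 s) ab_trace; rewrite motion_G3 //.
rewrite !(ads_ipDl, ads_ipNl, ads_ipZl) gram13 // gram23 // gram33 gram43 //.
move: (kappa s) (derive1 kappa s) (derive1 (derive1 (derive1 kappa)) s) => k0 k1 k3.
move: (derive1 (derive1 kappa) s) => k2 h.
have : 8 * (k3 + 2 * l * k1 - 6 * k0 * k1) = 0 by rewrite -h; ring.
by move/eqP; rewrite mulf_eq0 pnatr_eq0 => /eqP.
Qed.
End NullFrame.

Lemma null_curve_stationary_ode (R : realType) (J : set R) (F : R -> 'M[R]_2)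
    (a b : 'M[R]_2) (l : R) :
  (forall s, J s -> \forall z \near s, J z) -> null_curve J F ->
  (forall s, J s -> a *m F s + F s *m b =
     2 *: dn 3 F s - (6 * bending F s + 2 * l) *: dn 1 F s) ->
  \tr a + \tr b = 0 ->
  forall s, J s -> derive1n 3 (bending F) s + 2 * l * derive1 (bending F) s
    - 6 * bending F s * derive1 (bending F) s = 0.
Proof.
move=> J_nbhs F_null F_stationary ab_trace s Js.
have F_deriv n z : J z -> is_derive z 1 (dn n F) (dn n.+1 F z).
  by move=> /F_null[sF _]; exact: is_derive_dn.
have F_det z : J z -> \det (F z) = 1 by move=> /F_null[_ []].
have F_null1 z : J z -> ads_ip (dn 1 F z) (dn 1 F z) = 0.
  by move=> /F_null[_ [_ []]].
have F_proper z : J z -> ads_ip (dn 2 F z) (dn 2 F z) = 4.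
  by move=> /F_null[_ [_ [_ [_ [_]]]]].
exact: (frame_bending_stationary_ode J_nbhs F_deriv F_det F_null1 F_proper
  F_stationary ab_trace Js).
Qed.

Section Translation.
Variables (R : realType) (J : set R).
Hypothesis J_nbhs : forall s, J s -> \forall z \near s, J z.

Lemma dn_translate (g F : R -> 'M[R]_2) (P Q : 'M[R]_2) (c : R) :
  (forall s, J s -> smooth_at F s) -> (forall s, g (s + c) = P *m F s *m Q) ->
  forall n s, J s -> dn n g (s + c) = P *m dn n F s *m Q.
Proof.
move=> F_smooth gF; elim=> [|n IHn] s Js; first exact: gF.
have dFn := is_derive_dn n (F_smooth _ Js).
rewrite /dn derive1nS -derive1_shift derive1E.
rewrite (@near_eq_derive _ _ _ _ (fun z => P *m dn n F z *m Q)).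
  by rewrite derive_val mul0mx add0r mulmx0 addr0.
by near=> z; apply: IHn; near: z; exact: J_nbhs.
Unshelve. all: by end_near.
Qed.

Lemma bending_translate (g F : R -> 'M[R]_2) (P Q : 'M[R]_2) (c : R) :
  (forall s, J s -> smooth_at F s) -> (forall s, g (s + c) = P *m F s *m Q) ->
  \det P = 1 -> \det Q = 1 -> forall s, J s -> bending g (s + c) = bending F s.
Proof.
move=> F_smooth gF dP dQ s Js.
by rewrite /bending (dn_translate F_smooth gF 3 Js) ads_ip_SL2.
Qed.
End Translation.

Section StationaryCurve.
Variables (R : realType) (a b c d : \bar R) (g : R -> 'M[R]_2) (l : R)
  (A B : R -> 'M[R]_2).
Hypothesis g_stationary : stationary_LIEN (open_itv a b) (open_itv c d) g l A B.

Local Notation J := (open_itv a b).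
Local Notation I := (open_itv c d).
Local Notation F t := (fun s => evolution g l A B s t).

Lemma evolution_null t : I t -> null_curve J (F t).
Proof. by case: g_stationary => _ [_ [_ [_ [_ [+ _]]]]]; apply. Qed.

Lemma evolution_smooth t s : I t -> J s -> smooth_at (F t) s.
Proof. by move=> It Js; case: (evolution_null It Js). Qed.

Lemma evolution_SL2 t : I t ->
  [/\ smooth_at A t, smooth_at B t, \det (A t) = 1 & \det (B t) = 1].
Proof. by case: g_stationary => _ [_ [+ _]] It => /(_ t It)[? [? []]]. Qed.

Lemma evolution_translate t s : I t -> g (s + 2 * l * t) = \adj (A t) *m F t s *m B t.
Proof.
case/evolution_SL2=> _ _ dA dB; rewrite /evolution !mulmxA mul_adj_mx dA mul1mx.
by rewrite -mulmxA mulVmx ?mulmx1 // unitmxE dB unitr1.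
Qed.

Lemma evolution_bending t s : I t -> J s ->
  bending (F t) s = bending g (s + 2 * l * t).
Proof.
move=> It Js; have [_ _ dA dB] := evolution_SL2 It.
apply/esym/(bending_translate (@open_itv_nbhs R a b)) => //.
- by move=> z Jz; exact: evolution_smooth.
- by move=> z; exact: evolution_translate.
- by rewrite det_adj2.
- exact: dB.
Qed.

Lemma evolution_stationary t s : I t -> J s ->
  (derive1 A t *m \adj (A t)) *m F t s + F t s *m (B t *m \adj (derive1 B t))
  = 2 *: dn 3 (F t) s - (6 * bending (F t) s + 2 * l) *: dn 1 (F t) s.
Proof.
move=> It Js; have [sA sB dA dB] := evolution_SL2 It.
have flow : derive1 (evolution g l A B s) t = lien_velocity (F t) s.
  by case: g_stationary => _ [_ [_ [_ [_ [_ /(_ s t Js It) []]]]]].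
have dF := is_derive_dn 0 (evolution_smooth It Js).
have dFl := is_derive_affine (2 * l) t dF.
have dg : is_derive t 1 (fun u => g (s + 2 * l * u))
    (\adj (A t) *m (2 * l *: dn 1 (F t) s) *m B t).
  have -> : (fun u => g (s + 2 * l * u)) =
      (fun u => \adj (A t) *m F t (s + 2 * l * (u - t)) *m B t).
    by apply/funext => u; rewrite -evolution_translate //; congr g; ring.
  by apply: is_derive_eq; rewrite mul0mx add0r mulmx0 addr0.
have evoE : \forall u \near t,
    evolution g l A B s u = A u *m g (s + 2 * l * u) *m \adj (B u).
  near=> u; have Iu : I u by near: u; exact: open_itv_nbhs.
  by have [_ _ _ dBu] := evolution_SL2 Iu; rewrite /evolution invmx_SL2.
have dA' := is_derive1 (sA 0%N); have dB' := is_derive1 (sB 0%N).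
rewrite derive1E (near_eq_derive _ evoE) derive_val (evolution_translate s It) in flow.
rewrite mulmx_adj_cancel_SL2 // lien_velocityE in flow.
by rewrite scalerDl opprD addrA -flow addrAC addrK.
Unshelve. all: by end_near.
Qed.

Lemma evolution_trace t : I t ->
  \tr (derive1 A t *m \adj (A t)) + \tr (B t *m \adj (derive1 B t)) = 0.
Proof.
move=> It; have [sA sB _ _] := evolution_SL2 It.
have near_SL2 (M : R -> 'M[R]_2) : (forall u, I u -> \det (M u) = 1) ->
    \forall u \near t, \det (M u) = 1.
  by move=> M1; near=> u; apply: M1; near: u; exact: open_itv_nbhs.
have dA := is_derive1 (sA 0%N); have dB := is_derive1 (sB 0%N).
rewrite mxtrace_mulC (mxtrace_adj_derive_SL2 dA); last first.
  by apply: (near_SL2 A) => u /evolution_SL2[].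
rewrite -[B t]adj2K (mxtrace_adj_derive_SL2 (is_derive_adj2 dB)) ?addr0 //.
apply: (near_SL2 (fun u => \adj (B u))) => u /evolution_SL2[_ _ _ dBu].
by rewrite det_adj2.
Unshelve. all: by end_near.
Qed.

Lemma evolution_bending_ode t s : I t -> J s ->
  derive1n 3 (bending (F t)) s + 2 * l * derive1 (bending (F t)) s
    - 6 * bending (F t) s * derive1 (bending (F t)) s = 0.
Proof.
move=> It; apply: (null_curve_stationary_ode (@open_itv_nbhs R a b)
  (evolution_null It) _ (evolution_trace It)).
by move=> z Jz; exact: evolution_stationary.
Qed.

Lemma evolution_bending_time_derive t s : I t -> J s ->
  derive1 (fun u => bending (F u) s) t = 2 * l * derive1 (bending (F t)) s.
Proof.
move=> It Js.
have dk := is_derive1 (derivable_bending (evolution_smooth It Js)).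
have travel : {near t, (fun u => bending (F u) s) =1
    (fun u => bending (F t) (s + 2 * l * (u - t)))}.
  near=> u => /=; have Iu : I u by near: u; exact: open_itv_nbhs.
  have Ju : J (s + 2 * l * (u - t)).
    by near: u; apply: (near_affine (P := J)); exact: open_itv_nbhs Js.
  rewrite (evolution_bending Iu Js) (evolution_bending It Ju).
  by congr (bending g _); ring.
rewrite [LHS]derive1E (near_eq_derive _ travel) (is_derive_affine _ _ dk).(derive_val).
by rewrite /GRing.scale.
Unshelve. all: by end_near.
Qed.

Lemma evolution0 : F 0 = g.
Proof.
case: g_stationary => _ [_ [_ [A0 [B0 _]]]].
by apply/funext => s; rewrite /evolution A0 B0 invmx1 mul1mx mulmx1 mulr0 addr0.
Qed.
End StationaryCurve.

Theorem mainTheorem4 (R : realType) (a b c d : \bar R) (g : R -> 'M[R]_2) (l : R)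
  (A B : R -> 'M[R]_2) :
  (c < 0%:E < d)%E ->
  stationary_LIEN (open_itv a b) (open_itv c d) g l A B ->
  (forall s, open_itv a b s ->
     derive1n 3 (bending g) s + 2 * l * derive1 (bending g) s
       - 6 * bending g s * derive1 (bending g) s = 0) /\
  (forall s t, open_itv a b s -> open_itv c d t ->
     bending (fun s => evolution g l A B s t) s = bending g (s + 2 * l * t)) /\
  (forall s t, open_itv a b s -> open_itv c d t ->
     let k := fun s t => bending (fun s => evolution g l A B s t) s in
     derive1 (fun t => k s t) t + derive1n 3 (fun s => k s t) s
       - 6 * k s t * derive1 (fun s => k s t) s = 0).
Proof.
move=> I0 g_stat; split; [|split].
- move=> s Js; rewrite -(evolution0 g_stat).
  exact: (evolution_bending_ode g_stat I0 Js).
- by move=> s t Js It; exact: (evolution_bending g_stat It Js).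
move=> s t Js It /=.
rewrite [X in X + _ - _](evolution_bending_time_derive g_stat It Js).
by rewrite [X in X - _]addrC; exact: (evolution_bending_ode g_stat It Js).
Qed.
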